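(* Let $d\ge1$, let $i\in[n]$, and let $v_i:\mathbb{R}_{\ge0}^n\to\mathbb{R}_{\ge0}$ be a $d$-SOS function. Let $A$ be a uniformly random subset of $[n]\setminus\{i\}$ (each of the $2^{n-1}$ subsets equally likely) and $B=([n]\setminus\{i\})\setminus A$. Then for every $\mathbf{s}\in\mathbb{R}_{\ge0}^n$, $$\mathbb{E}_A\big[v_i(\mathbf{s}_A,\mathbf{0}_B,s_i)\big]\ge\frac{1}{d+1}\,v_i(\mathbf{s}),$$ where $(\mathbf{s}_A,\mathbf{0}_B,s_i)$ is the vector agreeing with $\mathbf{s}$ on $A\cup\{i\}$ and equal to $0$ on $B$.
   Context: A function $v:\mathbb{R}_{\ge0}^n\to\mathbb{R}_{\ge0}$ is $d$-SOS if for every coordinate $j$, every $s_j\ge0$, every $\delta\ge0$, and every $\mathbf{s}_{-j},\mathbf{s}'_{-j}$ with $\mathbf{s}'_{-j}\le\mathbf{s}_{-j}$ coordinate-wise, $d\cdot\big(v(\mathbf{s}'_{-j},s_j+\delta)-v(\mathbf{s}'_{-j},s_j)\big)\ge v(\mathbf{s}_{-j},s_j+\delta)-v(\mathbf{s}_{-j},s_j)$. SOS means $1$-SOS. *)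

(* the statement is purely order-algebraic (finite averages),
   so it is stated over an arbitrary real field R (which includes the reals). *)
From HB Require Import structures.
From mathcomp Require Import all_boot all_order all_algebra.
Set Implicit Arguments. Unset Strict Implicit. Unset Printing Implicit Defensive.
Import Order.TTheory GRing.Theory Num.Theory.
Local Open Scope ring_scope.

Definition nonneg_vec (R : realFieldType) (n : nat) (s : 'I_n -> R) : Prop :=
  forall k, 0 <= s k.

Definition upd (R : realFieldType) (n : nat) (s : 'I_n -> R) (j : 'I_n) (x : R)
  : 'I_n -> R := fun k => if k == j then x else s k.

(* d-SOS for v : R_{>=0}^n -> R (only values on the nonnegative orthant matter) *)
Definition dSOS (R : realFieldType) (n : nat) (d : R) (v : ('I_n -> R) -> R) : Prop :=
  forall (j : 'I_n) (s s' : 'I_n -> R) (x delta : R),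
    nonneg_vec s -> nonneg_vec s' ->
    (forall k, k != j -> s' k <= s k) ->
    0 <= x -> 0 <= delta ->
    v (upd s j (x + delta)) - v (upd s j x)
      <= d * (v (upd s' j (x + delta)) - v (upd s' j x)).

Definition restrict_vec (R : realFieldType) (n : nat) (s : 'I_n -> R)
  (A : {set 'I_n}) (i : 'I_n) : 'I_n -> R :=
  fun k => if (k \in A) || (k == i) then s k else 0.

From HB Require Import structures.
From mathcomp Require Import all_boot all_order all_algebra.
From Stdlib Require Import FunctionalExtensionality.
Import Order.TTheory GRing.Theory Num.Theory.
Local Open Scope ring_scope.

(* Write s_A for restrict_vec s A i (s on A ∪ {i}, zero elsewhere) and
   A^c for the complement of A inside [n] \ {i}.
   1. Adding a coordinate x to a larger set C ⊇ B gains at most d times what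
      it gains on B: this is the d-SOS inequality at coordinate x, read off
      s_C ≥ s_B (sos_marginal_add).
   2. Adding the coordinates of B one at a time telescopes this into
      v(s_{A ∪ B}) - v(s_A) <= d (v(s_B) - v(s_∅)) for A, B disjoint
      (sos_telescope).
   3. With B = A^c, A ∪ B ∪ {i} = [n] and v(s_∅) >= 0 give
      v(s) <= v(s_A) + d v(s_{A^c}) (split_bound).
   4. Summing over the 2^(n-1) subsets A and using that A |-> A^c permutes
      them, 2^(n-1) v(s) <= (1 + d) Σ_A v(s_A), which is the theorem. *)

Section Complement.
Variables (n : nat) (i : 'I_n).

Definition compl_i (A : {set 'I_n}) : {set 'I_n} := [set~ i] :\: A.

Lemma compl_i_sub (A : {set 'I_n}) : compl_i A \subset [set~ i].
Proof. exact: subsetDl. Qed.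

Lemma compl_iK (A : {set 'I_n}) : A \subset [set~ i] -> compl_i (compl_i A) = A.
Proof.
move=> Ai; apply/setP => k; move: (subsetP Ai k); rewrite /compl_i !inE.
by case: (k \in A); case: (k == i) => //= ->.
Qed.

Lemma sum_compl_i (V : nmodType) (F : {set 'I_n} -> V) :
  \sum_(A : {set 'I_n} | A \subset [set~ i]) F (compl_i A) =
  \sum_(A : {set 'I_n} | A \subset [set~ i]) F A.
Proof.
rewrite (reindex_onto compl_i compl_i) //=; last exact: compl_iK.
apply: eq_big => [A|A /andP[_ /eqP ->]] //; rewrite compl_i_sub /=.
by apply/eqP/idP => [<-|/compl_iK]; first exact: compl_i_sub.
Qed.

Lemma card_subsets_compl1 :
  #|[pred A : {set 'I_n} | A \subset [set~ i]]| = (2 ^ n.-1)%N.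
Proof.
rewrite (@eq_card _ _ (powerset [set~ i])) => [|A]; last by rewrite !inE.
by rewrite card_powerset cardsC1 card_ord.
Qed.

End Complement.

Arguments compl_i {n} i A.
Arguments compl_i_sub {n i} A.
Arguments sum_compl_i {n} i {V} F.

Section Restriction.
Variables (R : realFieldType) (n : nat) (i : 'I_n) (s : 'I_n -> R).
Hypothesis hs : nonneg_vec s.

Lemma restrict_nonneg (C : {set 'I_n}) : nonneg_vec (restrict_vec s C i).
Proof. by move=> k; rewrite /restrict_vec; case: ifP. Qed.

Lemma restrict_le_subset (B C : {set 'I_n}) k : B \subset C ->
  restrict_vec s B i k <= restrict_vec s C i k.
Proof.
move=> BC; rewrite /restrict_vec.
case: ifP => [/orP[/(subsetP BC) -> //|-> //]|_]; first by rewrite orbT.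
by case: ifP.
Qed.

Lemma restrict_upd_zero (C : {set 'I_n}) x : x \notin C -> x != i ->
  upd (restrict_vec s C i) x 0 = restrict_vec s C i.
Proof.
move=> xC xi; apply: functional_extensionality => k; rewrite /upd /restrict_vec.
by case: eqP => // ->; rewrite (negbTE xC) (negbTE xi).
Qed.

Lemma restrict_upd_add (C : {set 'I_n}) x :
  upd (restrict_vec s C i) x (0 + s x) = restrict_vec s (x |: C) i.
Proof.
apply: functional_extensionality => k; rewrite /upd /restrict_vec add0r in_setU1.
by case: eqP => [->|].
Qed.

Lemma restrict_full : restrict_vec s [set~ i] i = s.
Proof.
by apply: functional_extensionality => k; rewrite /restrict_vec !inE; case: eqP.
Qed.

Variables (d : R) (v : ('I_n -> R) -> R).
Hypothesis hv : dSOS d v.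

(* Step 1: the d-SOS inequality for the move 0 -> s x at coordinate x. *)
Lemma sos_marginal_add (B C : {set 'I_n}) x :
  B \subset C -> x \notin C -> x != i ->
  v (restrict_vec s (x |: C) i) - v (restrict_vec s C i) <=
  d * (v (restrict_vec s (x |: B) i) - v (restrict_vec s B i)).
Proof.
move=> BC xC xi; have xB : x \notin B by apply: contra xC; apply: (subsetP BC).
have := hv x (restrict_vec s C i) (restrict_vec s B i) 0 (s x)
  (restrict_nonneg C) (restrict_nonneg B) _ (lexx 0) (hs x).
rewrite !restrict_upd_add !restrict_upd_zero //.
by apply=> k _; apply: restrict_le_subset.
Qed.

Lemma sos_telescope (A B : {set 'I_n}) :
  [disjoint A & B] -> B \subset [set~ i] ->
  v (restrict_vec s (A :|: B) i) - v (restrict_vec s A i) <=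
  d * (v (restrict_vec s B i) - v (restrict_vec s set0 i)).
Proof.
have [m] := ubnP #|B|; elim: m B => // m IH B hB dAB Bi.
have [->|[x xB]] := set_0Vmem B; first by rewrite setU0 !subrr mulr0.
set B' := B :\ x; have eB : B = x |: B' by rewrite setD1K.
have B'B : B' \subset B := subsetDl B [set x].
have hB' : (#|B'| < m)%N by move: hB; rewrite (cardsD1 x B) xB.
have IH' := IH B' hB' (disjointWr B'B dAB) (subset_trans B'B Bi).
have xA : x \notin A by apply: contraTN xB => xA; rewrite (disjointFr dAB).
have xi : x != i by have := subsetP Bi x xB; rewrite !inE.
have step := @sos_marginal_add B' (A :|: B') x (subsetUr _ _).
rewrite in_setU (negbTE xA) setD11 in step.
rewrite eB setUCA; have := lerD (step isT xi) IH'.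
by rewrite -mulrDr !addrA !subrK.
Qed.

(* Step 3: v(s) <= v(s_A) + d v(s_{A^c}); only d >= 0 is needed, not d >= 1. *)
Lemma split_bound (A : {set 'I_n}) :
  0 <= d -> (forall t, nonneg_vec t -> 0 <= v t) -> A \subset [set~ i] ->
  v s <= v (restrict_vec s A i) + d * v (restrict_vec s (compl_i i A) i).
Proof.
move=> d0 hv0 Ai.
have dA : [disjoint A & compl_i i A].
  by rewrite -setI_eq0 /compl_i setDE setICA setICr setI0.
have := sos_telescope A (compl_i i A) dA (compl_i_sub A).
have -> : A :|: compl_i i A = [set~ i] by rewrite /compl_i -{1}(setIidPr Ai) setID.
rewrite restrict_full lerBlDl => /le_trans; apply.
by rewrite mulrBr lerD2l gerBl mulr_ge0 // hv0 //; apply: restrict_nonneg.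
Qed.

End Restriction.

Theorem mainTheorem2 (R : realFieldType) (n : nat) (d : R) (i : 'I_n)
  (v : ('I_n -> R) -> R)
  (hd : 1 <= d)
  (hv_nonneg : forall s, nonneg_vec s -> 0 <= v s)
  (hv : dSOS d v)
  (s : 'I_n -> R) (hs : nonneg_vec s) :
  (d + 1)^-1 * v s <=
  ((2 ^ n.-1)%:R)^-1 *
    \sum_(A : {set 'I_n} | A \subset [set~ i]) v (restrict_vec s A i).
Proof.
set S := \sum_(A | _) _; set N := (2 ^ n.-1)%:R.
have d0 : 0 <= d := le_trans ler01 hd.
have total : N * v s <= (d + 1) * S.
  have -> : N * v s = \sum_(A : {set 'I_n} | A \subset [set~ i]) v s.
    by rewrite sumr_const card_subsets_compl1 mulr_natl.
  have -> : (d + 1) * S = \sum_(A : {set 'I_n} | A \subset [set~ i])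
      (v (restrict_vec s A i) + d * v (restrict_vec s (compl_i i A) i)).
    rewrite big_split /= -mulr_sumr.
    by rewrite (sum_compl_i i (fun A => v (restrict_vec s A i))) mulrDl mul1r addrC.
  by apply: ler_sum => A Ai; apply: split_bound.
have Npos : 0 < N by rewrite ltr0n expn_gt0.
have dpos : 0 < d + 1 by rewrite ltr_wpDl.
by rewrite ler_pdivrMl // mulrCA ler_pdivlMl.
Qed.
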